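(* Let $\Phi$ be the closure $cl(\varphi_0)$ of a formula and $M^*$ the canonical model for $\Phi$. If $[\circ^+]_i\varphi\in\Phi$ and $\Gamma\in W^*$, then $[\circ^+]_i\varphi\in\Gamma$ iff every $[\circ^+]_i$-path from $\Gamma$ is both a $\varphi$-path and a $[\circ^+]_i\varphi$-path.
   Context: $\mathcal{L}_{AIL}$: $\varphi::=p\mid\neg\varphi\mid\varphi\wedge\varphi\mid A_i\varphi\mid I_i\varphi\mid E_i\varphi\mid[\approx]_i\varphi\mid[\circ^+]_i\varphi$ (countable atoms, finite agent set). Hilbert system $\mathbf{AIL}$: axioms — propositional tautologies; $A_i\varphi\leftrightarrow A_i\neg\varphi$; $A_i(\varphi\wedge\psi)\leftrightarrow A_i\varphi\wedge A_i\psi$; $A_i\varphi\leftrightarrow A_iO_j\varphi$ for $O_j\in\{A_j,I_j,[\approx]_j,[\circ^+]_j,E_j\}$; $A_i\varphi\to I_iA_i\varphi$; $\neg A_i\varphi\to I_i\neg A_i\varphi$; $A_ip\wedge p\to[\approx]_ip$; for $\Box\in\{I_i,[\approx]_i\}$: $\Box(\varphi\to\psi)\to(\Box\varphi\to\Box\psi)$, $\Box\varphi\to\varphi$, $\neg\Box\varphi\to\Box\neg\Box\varphi$; $[\circ^+]_i(\varphi\to\psi)\to([\circ^+]_i\varphi\to[\circ^+]_i\psi)$; $[\circ^+]_i\varphi\to\varphi\wedge[\approx]_iI_i[\circ^+]_i\varphi$; $[\circ^+]_i(\varphi\to[\approx]_iI_i\varphi)\to(\varphi\to[\circ^+]_i\varphi)$;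 $E_i\varphi\leftrightarrow A_i\varphi\wedge[\circ^+]_i\varphi$; rules: modus ponens, necessitation for $I_i,[\approx]_i,[\circ^+]_i$. $\Gamma\vdash\varphi$ iff $\vdash\bigwedge\Gamma'\to\varphi$ for some finite $\Gamma'\subseteq\Gamma$. $cl(\varphi_0)$ is the smallest set containing $\varphi_0$ closed under: subformulas; $\neg\psi$ for non-negations $\psi$; $A_i\psi\Rightarrow A_i\chi$ for subformulas $\chi$ of $\psi$; $A_i\psi\Rightarrow I_iA_i\psi,I_i\neg A_i\psi,[\approx]_ip$ for atoms $p$ in $\psi$; $I_i\psi\Rightarrow I_iI_i\psi,I_i\neg I_i\psi$ unless $\psi$ is $I_i\chi$ or $\neg I_i\chi$; analogously for $[\approx]_i$; $[\circ^+]_i\psi\Rightarrow[\approx]_iI_i[\circ^+]_i\psi$; $E_i\psi\Rightarrow A_i\psi,[\circ^+]_i\psi$. $W^*$ is the set of maximal consistent sets in $\Phi$ (subsets $\Gamma\subseteq\Phi$ with $\Gamma\nvdash\bot$ not properly extendable within $\Phi$). $(\Gamma,\Delta)\in\sim_i^*$ iff $\{\psi:I_i\psi\in\Gamma\}\subseteq\Delta$; $(\Gamma,\Delta)\in\approx_i^*$ iff $\{\psi:[\approx]_i\psi\in\Gamma\}\subseteq\Delta$; $\sim_i^*\circ\approx_i^*=\{(\Gamma,\Delta):\exists\Theta\,((\Gamma,\Theta)\in\approx_i^*,(\Theta,\Delta)\in\sim_i^* )\}$. A $[\circ^+]_i$-path from $\Gamma$ is a finite sequence $\Gamma_0,\dots,\Gamma_n$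 of elements of $W^*$ with $\Gamma_0=\Gamma$ and $(\Gamma_k,\Gamma_{k+1})\in\sim_i^*\circ\approx_i^*$ for all $0\le k<n$. For a formula $\psi$, a $\psi$-path is a sequence $\Gamma_0,\dots,\Gamma_n$ of elements of $W^*$ with $\psi\in\Gamma_k$ for all $0\le k\le n$. *)

From Stdlib Require Import List.
Import ListNotations.

Section AIL.
Context {Ag : Type}.

Inductive form : Type :=
| Atom : nat -> form
| Neg : form -> form
| And : form -> form -> form
| Aw : Ag -> form -> form
| Inf : Ag -> form -> form
| Ex : Ag -> form -> form
| Approx : Ag -> form -> form
| Circ : Ag -> form -> form.

Definition Imp (a b : form) : form := Neg (And a (Neg b)).
Definition Iff (a b : form) : form := And (Imp a b) (Imp b a).
Definition Bot : form := And (Atom 0) (Neg (Atom 0)).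
Definition Top : form := Neg Bot.

(* Propositional tautologies: true under every boolean valuation that treats
   atoms and modal formulas as propositional letters. *)
Fixpoint tval (v : form -> bool) (f : form) : bool :=
  match f with
  | Neg a => negb (tval v a)
  | And a b => andb (tval v a) (tval v b)
  | _ => v f
  end.
Definition tautology (f : form) : Prop := forall v, tval v f = true.

Inductive isOp : (form -> form) -> Prop :=
| op_A j : isOp (Aw j)
| op_I j : isOp (Inf j)
| op_S j : isOp (Approx j)
| op_C j : isOp (Circ j)
| op_E j : isOp (Ex j).

Inductive isBox : (form -> form) -> Prop :=
| box_I i : isBox (Inf i)
| box_S i : isBox (Approx i).

Inductive prov : form -> Prop :=
| ax_taut f : tautology f -> prov f
| ax_Aneg i f : prov (Iff (Aw i f) (Aw i (Neg f)))
| ax_Aand i f g : prov (Iff (Aw i (And f g)) (And (Aw i f) (Aw i g)))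
| ax_Aop i O f : isOp O -> prov (Iff (Aw i f) (Aw i (O f)))
| ax_AI i f : prov (Imp (Aw i f) (Inf i (Aw i f)))
| ax_nAI i f : prov (Imp (Neg (Aw i f)) (Inf i (Neg (Aw i f))))
| ax_Aatom i p : prov (Imp (And (Aw i (Atom p)) (Atom p)) (Approx i (Atom p)))
| ax_K B f g : isBox B -> prov (Imp (B (Imp f g)) (Imp (B f) (B g)))
| ax_T B f : isBox B -> prov (Imp (B f) f)
| ax_5 B f : isBox B -> prov (Imp (Neg (B f)) (B (Neg (B f))))
| ax_CK i f g : prov (Imp (Circ i (Imp f g)) (Imp (Circ i f) (Circ i g)))
| ax_Cfix i f : prov (Imp (Circ i f) (And f (Approx i (Inf i (Circ i f)))))
| ax_Cind i f : prov (Imp (Circ i (Imp f (Approx i (Inf i f)))) (Imp f (Circ i f)))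
| ax_E i f : prov (Iff (Ex i f) (And (Aw i f) (Circ i f)))
| r_MP f g : prov (Imp f g) -> prov f -> prov g
| r_NecI i f : prov f -> prov (Inf i f)
| r_NecS i f : prov f -> prov (Approx i f)
| r_NecC i f : prov f -> prov (Circ i f).

Fixpoint bigAnd (l : list form) : form :=
  match l with
  | [] => Top
  | x :: l' => And x (bigAnd l')
  end.

Definition derives (G : form -> Prop) (f : form) : Prop :=
  exists l : list form, (forall x, In x l -> G x) /\ prov (Imp (bigAnd l) f).

Inductive Sub : form -> form -> Prop :=
| sub_refl f : Sub f f
| sub_neg a f : Sub a f -> Sub a (Neg f)
| sub_andl a f g : Sub a f -> Sub a (And f g)
| sub_andr a f g : Sub a g -> Sub a (And f g)
| sub_A a i f : Sub a f -> Sub a (Aw i f)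
| sub_I a i f : Sub a f -> Sub a (Inf i f)
| sub_E a i f : Sub a f -> Sub a (Ex i f)
| sub_S a i f : Sub a f -> Sub a (Approx i f)
| sub_C a i f : Sub a f -> Sub a (Circ i f).

Definition isNeg (f : form) : Prop := exists g, f = Neg g.

Inductive cl (f0 : form) : form -> Prop :=
| cl_base : cl f0 f0
| cl_sub f g : cl f0 f -> Sub g f -> cl f0 g
| cl_neg f : cl f0 f -> ~ isNeg f -> cl f0 (Neg f)
| cl_Asub i f g : cl f0 (Aw i f) -> Sub g f -> cl f0 (Aw i g)
| cl_AI i f : cl f0 (Aw i f) -> cl f0 (Inf i (Aw i f))
| cl_AnI i f : cl f0 (Aw i f) -> cl f0 (Inf i (Neg (Aw i f)))
| cl_Aatom i f p : cl f0 (Aw i f) -> Sub (Atom p) f -> cl f0 (Approx i (Atom p))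
| cl_II i f : cl f0 (Inf i f) -> ~ (exists g, f = Inf i g \/ f = Neg (Inf i g)) ->
    cl f0 (Inf i (Inf i f))
| cl_InI i f : cl f0 (Inf i f) -> ~ (exists g, f = Inf i g \/ f = Neg (Inf i g)) ->
    cl f0 (Inf i (Neg (Inf i f)))
| cl_SS i f : cl f0 (Approx i f) -> ~ (exists g, f = Approx i g \/ f = Neg (Approx i g)) ->
    cl f0 (Approx i (Approx i f))
| cl_SnS i f : cl f0 (Approx i f) -> ~ (exists g, f = Approx i g \/ f = Neg (Approx i g)) ->
    cl f0 (Approx i (Neg (Approx i f)))
| cl_C i f : cl f0 (Circ i f) -> cl f0 (Approx i (Inf i (Circ i f)))
| cl_EA i f : cl f0 (Ex i f) -> cl f0 (Aw i f)
| cl_EC i f : cl f0 (Ex i f) -> cl f0 (Circ i f).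

Definition inW (Phi G : form -> Prop) : Prop :=
  (forall x, G x -> Phi x) /\ ~ derives G Bot /\
  (forall D : form -> Prop, (forall x, G x -> D x) -> (forall x, D x -> Phi x) ->
     ~ derives D Bot -> forall x, D x -> G x).

Definition simR (i : Ag) (G D : form -> Prop) : Prop :=
  forall f, G (Inf i f) -> D f.
Definition approxR (i : Ag) (G D : form -> Prop) : Prop :=
  forall f, G (Approx i f) -> D f.
(* composition sim_i o approx_i: first an approx_i step, then a sim_i step *)
Definition compR (Phi : form -> Prop) (i : Ag) (G D : form -> Prop) : Prop :=
  exists T, inW Phi T /\ approxR i G T /\ simR i T D.

(* the path Gamma_0, ..., Gamma_n is represented as the list (Gamma_0 :: rest) *)
Fixpoint chain (Phi : form -> Prop) (i : Ag) (G : form -> Prop)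
    (rest : list (form -> Prop)) : Prop :=
  match rest with
  | [] => True
  | D :: rest' => compR Phi i G D /\ chain Phi i D rest'
  end.

Definition circ_path (Phi : form -> Prop) (i : Ag) (G : form -> Prop)
    (rest : list (form -> Prop)) : Prop :=
  (forall D, In D (G :: rest) -> inW Phi D) /\ chain Phi i G rest.

Definition psi_path (psi : form) (p : list (form -> Prop)) : Prop :=
  forall D, In D p -> D psi.

End AIL.
Arguments form : clear implicits.

(* Maximal consistent subsets of the closure are deductively closed within it,
   so the fixpoint axiom [[o+]_i phi -> phi /\ [~~]_i I_i [o+]_i phi] puts [phi] and
   [[~~]_i I_i [o+]_i phi] into every such set containing [[o+]_i phi]; the latter
   is carried by one [sim_i o approx_i] step to [[o+]_i phi] in the next set, so
   [[o+]_i phi] propagates along every path.  Conversely, the one-element path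
   [Gamma] is itself a [[o+]_i]-path. *)

From Stdlib Require Import List Bool.
Import ListNotations.

Section CanonicalModel.
Context {Ag : Type}.
Implicit Types (G : form Ag -> Prop) (a b f psi : form Ag).

Lemma tval_Top (v : form Ag -> bool) : tval v Top = true.
Proof. simpl. destruct (v (Atom 0)); reflexivity. Qed.

Lemma tval_Imp (v : form Ag -> bool) a b :
  tval v (Imp a b) = true <-> (tval v a = true -> tval v b = true).
Proof. simpl. destruct (tval v a), (tval v b); simpl; intuition congruence. Qed.

Lemma tval_bigAnd (v : form Ag -> bool) (l : list (form Ag)) :
  tval v (bigAnd l) = true <-> (forall x, In x l -> tval v x = true).
Proof.
  induction l as [|x l IH]; simpl.
  - split; [intros _ x []|intros _; apply tval_Top].
  - rewrite andb_true_iff, IH. split.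
    + intros [Hx Hl] y [<-|Hy]; auto.
    + intros H; split; auto.
Qed.

Lemma prov_tconseq (hs : list (form Ag)) (c : form Ag) :
  (forall v, (forall h, In h hs -> tval v h = true) -> tval v c = true) ->
  (forall h, In h hs -> prov h) -> prov c.
Proof.
  revert c; induction hs as [|h hs IH]; intros c Hv Hp.
  - apply ax_taut. intro v. apply Hv. intros h [].
  - apply (r_MP h c); [|apply Hp; left; reflexivity].
    apply IH.
    + intros v Hhs. apply tval_Imp. intro Hh.
      apply Hv. intros h' [<-|H']; auto.
    + intros h' H'. apply Hp. right; exact H'.
Qed.

Lemma prov_imp_andl a b c : prov (Imp a (And b c)) -> prov (Imp a b).
Proof.
  intro H. apply (prov_tconseq [Imp a (And b c)]); [|intros h [<-|[]]; exact H].
  intros v Hv. specialize (Hv _ (or_introl eq_refl)).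
  rewrite tval_Imp in Hv |- *. intro Ha. simpl in Hv.
  apply andb_true_iff in Hv as [Hb _]; auto.
Qed.

Lemma prov_imp_andr a b c : prov (Imp a (And b c)) -> prov (Imp a c).
Proof.
  intro H. apply (prov_tconseq [Imp a (And b c)]); [|intros h [<-|[]]; exact H].
  intros v Hv. specialize (Hv _ (or_introl eq_refl)).
  rewrite tval_Imp in Hv |- *. intro Ha. simpl in Hv.
  apply andb_true_iff in Hv as [_ Hc]; auto.
Qed.

Lemma derives_prov_imp G a b : G a -> prov (Imp a b) -> derives G b.
Proof.
  intros Ga Hab. exists [a]. split; [intros x [<-|[]]; exact Ga|].
  apply (prov_tconseq [Imp a b]); [|intros h [<-|[]]; exact Hab].
  intros v Hv. specialize (Hv _ (or_introl eq_refl)).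
  rewrite tval_Imp in Hv |- *. intro Ha. simpl in Ha.
  apply andb_true_iff in Ha as [Ha _]; auto.
Qed.

Lemma derives_MP G a b : derives G a -> derives G (Imp a b) -> derives G b.
Proof.
  intros [l [Gl Hla]] [m [Gm Hmab]]. exists (l ++ m). split.
  { intros x Hx. apply in_app_or in Hx as [Hx|Hx]; auto. }
  apply (prov_tconseq [Imp (bigAnd l) a; Imp (bigAnd m) (Imp a b)]).
  - intros v Hv. pose proof (Hv _ (or_introl eq_refl)) as Va.
    pose proof (Hv _ (or_intror (or_introl eq_refl))) as Vab.
    rewrite tval_Imp in Va, Vab |- *. intro Hlm.
    rewrite tval_bigAnd in Hlm.
    assert (Hl : tval v (bigAnd l) = true)
      by (apply tval_bigAnd; intros x Hx; apply Hlm, in_or_app; auto).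
    assert (Hm : tval v (bigAnd m) = true)
      by (apply tval_bigAnd; intros x Hx; apply Hlm, in_or_app; auto).
    specialize (Vab Hm). rewrite tval_Imp in Vab. auto.
  - intros h [<-|[<-|[]]]; assumption.
Qed.

Lemma bigAnd_remove G psi (m : list (form Ag)) :
  (forall x, In x m -> G x \/ x = psi) ->
  exists m', (forall x, In x m' -> G x) /\
    forall v, tval v (bigAnd m') = true -> tval v psi = true ->
      tval v (bigAnd m) = true.
Proof.
  induction m as [|x m IH]; intros Hm.
  - exists []. split; [intros x []|]. intros; apply tval_Top.
  - destruct IH as [m' [Gm' Hv]]; [intros y Hy; apply Hm; right; exact Hy|].
    destruct (Hm x (or_introl eq_refl)) as [Gx| ->].
    + exists (x :: m'). split; [intros y [<-|Hy]; auto|].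
      intros v Vxm' Vpsi. simpl in *. apply andb_true_iff in Vxm' as [Vx Vm'].
      rewrite Vx, Hv; auto.
    + exists m'. split; [exact Gm'|]. intros v Vm' Vpsi. simpl.
      rewrite Vpsi, Hv; auto.
Qed.

Lemma derives_deduction G psi b :
  derives (fun x => G x \/ x = psi) b -> derives G (Imp psi b).
Proof.
  intros [m [Hm Hmb]]. destruct (bigAnd_remove G psi m Hm) as [m' [Gm' Hv]].
  exists m'. split; [exact Gm'|].
  apply (prov_tconseq [Imp (bigAnd m) b]); [|intros h [<-|[]]; exact Hmb].
  intros v Vmb. specialize (Vmb _ (or_introl eq_refl)).
  rewrite tval_Imp in Vmb. do 2 (rewrite tval_Imp; intro). auto.
Qed.

Lemma inW_derives_closed (Phi : form Ag -> Prop) G psi :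
  inW Phi G -> Phi psi -> derives G psi -> G psi.
Proof.
  intros [GPhi [Gcons Gmax]] Phi_psi Gpsi.
  apply (Gmax (fun x => G x \/ x = psi)); [auto| |idtac|right; reflexivity].
  - intros x [Gx| ->]; auto.
  - intro Hbot. apply Gcons, (derives_MP G psi); [exact Gpsi|].
    apply derives_deduction, Hbot.
Qed.

Lemma inW_prov_imp_closed (Phi : form Ag -> Prop) G a b :
  inW Phi G -> Phi b -> G a -> prov (Imp a b) -> G b.
Proof.
  intros HG Phi_b Ga Hab.
  apply (inW_derives_closed Phi); [exact HG|exact Phi_b|].
  exact (derives_prov_imp G a b Ga Hab).
Qed.

Variables (f0 f : form Ag) (i : Ag).
Hypothesis cl_circ : cl f0 (Circ i f).

Lemma inW_circ_unfold G :
  inW (cl f0) G -> G (Circ i f) -> G f /\ G (Approx i (Inf i (Circ i f))).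
Proof.
  intros HG Gcirc. split.
  - apply (inW_prov_imp_closed (cl f0) G (Circ i f)); auto.
    + apply (cl_sub _ _ _ cl_circ), sub_C, sub_refl.
    + apply (prov_imp_andl _ _ _ (ax_Cfix i f)).
  - apply (inW_prov_imp_closed (cl f0) G (Circ i f)); auto.
    + apply cl_C, cl_circ.
    + apply (prov_imp_andr _ _ _ (ax_Cfix i f)).
Qed.

Lemma compR_circ G D :
  inW (cl f0) G -> G (Circ i f) -> compR (cl f0) i G D -> D (Circ i f).
Proof.
  intros HG Gcirc [T [_ [GT TD]]].
  apply TD, GT, (inW_circ_unfold G HG Gcirc).
Qed.

Lemma circ_path_circ (rest : list (form Ag -> Prop)) G :
  circ_path (cl f0) i G rest -> G (Circ i f) -> psi_path (Circ i f) (G :: rest).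
Proof.
  revert G; induction rest as [|E rest IH]; intros G [HW Hchain] Gcirc D HD.
  - destruct HD as [<-|[]]; exact Gcirc.
  - destruct HD as [<-|HD]; [exact Gcirc|].
    destruct Hchain as [GE Hchain].
    apply (IH E); [split|..|exact HD].
    + intros D' HD'. apply HW. right; exact HD'.
    + exact Hchain.
    + apply (compR_circ G); [apply HW; left; reflexivity|exact Gcirc|exact GE].
Qed.

End CanonicalModel.

Theorem lemma11 (Ag : Type) (Hfin : exists l : list Ag, forall a, In a l)
  (phi0 phi : form Ag) (i : Ag) (Gamma : form Ag -> Prop) :
  cl phi0 (Circ i phi) ->
  inW (cl phi0) Gamma ->
  (Gamma (Circ i phi) <->
   forall rest : list (form Ag -> Prop),
     circ_path (cl phi0) i Gamma rest ->
     psi_path phi (Gamma :: rest) /\ psi_path (Circ i phi) (Gamma :: rest)).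
Proof.
  intros Hcl HGamma. split.
  - intros Gcirc rest Hpath.
    pose proof (circ_path_circ phi0 phi i Hcl rest Gamma Hpath Gcirc) as Hcirc.
    split; [|exact Hcirc].
    intros D HD. destruct Hpath as [HW _].
    apply (inW_circ_unfold phi0 phi i Hcl D (HW D HD) (Hcirc D HD)).
  - intros Hpaths.
    destruct (Hpaths []) as [_ Hcirc].
    + split; [intros D [<-|[]]; exact HGamma|exact I].
    + apply Hcirc. left; reflexivity.
Qed.
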